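(* Let $K$ be an admissible kernel on $X\times Y$. Then the invariant measure $m_Y$ satisfies $$\inf_{\mu\in\mathcal{M}(Y)}\sup_{x\in X}U_K^\mu(x)=\sup_{x\in X}U_K^{m_Y}(x),$$ i.e. $m_Y$ minimizes $\mu\mapsto\sup_{x\in X}\int_Y K(x,y)\,d\mu(y)$ over $\mathcal{M}(Y)$.
   Context: $(X,d_X)$ and $(Y,d_Y)$ are compact metric spaces and $G$ is a compact topological group acting isometrically and transitively on both $X$ and $Y$. $\mathcal{M}(Y)$ is the set of Borel probability measures on $Y$; $m_X$ and $m_Y$ denote the unique $G$-invariant Radon (Borel) probability measures on $X$ and $Y$. A Borel measurable $K:X\times Y\to\mathbb{R}\cup\{-\infty\}$ is an admissible kernel if: (i) there is $B_K\in[0,\infty)$ with $-\infty\le K(x,y)\le B_K$ for all $x,y$; (ii) $\int_X|K(x,y)|\,dm_X(x)<\infty$ for every $y\in Y$; (iii) for every $y$, $K(\cdot,y)$ is upper semi-continuous; (iv) $K(g(x),y)=K(x,g^{-1}(y))$ for all $g\in G,x\in X,y\in Y$. For $\mu\in\mathcal{M}(Y)$, $U_K^\mu(x)=\int_Y K(x,y)\,d\mu(y)$. *)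

From HB Require Import structures.
From mathcomp Require Import all_boot all_order all_algebra.
From mathcomp Require Import all_classical all_reals all_analysis measurable_realfun.
Set Implicit Arguments. Unset Strict Implicit. Unset Printing Implicit Defensive.
Import Order.TTheory GRing.Theory Num.Theory.
Local Open Scope classical_set_scope.
Local Open Scope ring_scope.

Definition is_metric (R : realType) (T : Type) (dist : T -> T -> R) : Prop :=
  (forall x y, 0 <= dist x y) /\
  (forall x y, dist x y = 0 <-> x = y) /\
  (forall x y, dist x y = dist y x) /\
  (forall x y z, dist x z <= dist x y + dist y z).

Definition dopen (R : realType) (T : Type) (dist : T -> T -> R) (A : set T) : Prop :=
  forall x, A x -> exists2 e : R, 0 < e & forall z, dist x z < e -> A z.

Definition dcompact (R : realType) (T : Type) (dist : T -> T -> R) : Prop :=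
  forall F : set (set T), (forall A, F A -> dopen dist A) ->
    [set: T] `<=` \bigcup_(A in F) A ->
    exists s : seq (set T), (forall A, A \in s -> F A) /\
      [set: T] `<=` \bigcup_(A in [set A | A \in s]) A.

Definition compact_metric_borel (R : realType) (d : measure_display)
  (T : measurableType d) (dist : T -> T -> R) : Prop :=
  [/\ is_metric dist, dcompact dist &
      (@measurable d T) = <<s [set A | dopen dist A] >>].

Definition compact_topological_group (G : topologicalType)
  (mul : G -> G -> G) (inv : G -> G) (one : G) : Prop :=
  [/\ (forall a b c, mul a (mul b c) = mul (mul a b) c),
      (forall a, mul one a = a /\ mul a one = a),
      (forall a, mul (inv a) a = one /\ mul a (inv a) = one),
      (continuous (fun p : G * G => mul p.1 p.2) /\ continuous inv) &
      compact [set: G]].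

Definition isometric_transitive_action (R : realType) (G : topologicalType)
  (mul : G -> G -> G) (one : G) (T : Type) (dist : T -> T -> R)
  (act : G -> T -> T) : Prop :=
  [/\ (forall x, act one x = x),
      (forall g h x, act (mul g h) x = act g (act h x)),
      (forall x, forall g0 : G, forall e : R, 0 < e ->
          \forall g \near g0, dist (act g x) (act g0 x) < e),
      (forall g x y, dist (act g x) (act g y) = dist x y) &
      (forall x y, exists g, act g x = y)].

Definition invariant_measure (R : realType) (d : measure_display)
  (T : measurableType d) (G : Type) (act : G -> T -> T)
  (m : probability T R) : Prop :=
  forall g A, measurable A -> m (act g @^-1` A) = m A.

Definition usc (R : realType) (T : Type) (dist : T -> T -> R)
  (f : T -> \bar R) : Prop :=
  forall x0 (t : R), (f x0 < t%:E)%E ->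
    exists2 delta : R, 0 < delta & forall x, dist x x0 < delta -> (f x < t%:E)%E.

Definition admissible_kernel (R : realType) (dX dY : measure_display)
  (X : measurableType dX) (Y : measurableType dY)
  (distX : X -> X -> R) (G : Type) (inv : G -> G)
  (actX : G -> X -> X) (actY : G -> Y -> Y) (mX : probability X R)
  (K : X -> Y -> \bar R) : Prop :=
  [/\ measurable_fun [set: X * Y] (fun p : X * Y => K p.1 p.2),
      (exists2 B : R, 0 <= B & forall x y, (K x y <= B%:E)%E),
      (forall y, (\int[mX]_x `|K x y| < +oo)%E),
      (forall y, usc distX (fun x => K x y)) &
      (forall g x y, K (actX g x) y = K x (actY (inv g) y))].

Definition potential (R : realType) (dY : measure_display)
  (X : Type) (Y : measurableType dY) (K : X -> Y -> \bar R)
  (mu : probability Y R) (x : X) : \bar R :=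
  (\int[mu]_y K x y)%E.

From HB Require Import structures.
From mathcomp Require Import all_boot all_order all_algebra.
From mathcomp Require Import all_classical all_reals all_analysis measurable_realfun.
Import Order.TTheory GRing.Theory Num.Theory.
Local Open Scope classical_set_scope.
Local Open Scope ring_scope.

(* Write [K = B - F] with [F >= 0] and [V_mu x := \int[mu] F x].  By Tonelli,
   [\int[mX] V_mu = \int[mu] (y |-> \int[mX]_x F x y)], and the inner integral does
   not depend on [y] (transitivity on [Y], invariance of [mX]); so every [V_mu]
   has the same mean [w] over [X].  Transitivity on [X] and invariance of [mY]
   make [V_mY] constant, hence equal to [w].  Thus
   [sup U_mu = B - inf V_mu >= B - w = sup U_mY]. *)

Section probability_integral.
Context {R : realType} {d : measure_display} {T : measurableType d}.
Variable P : probability T R.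
Local Open Scope ereal_scope.

Lemma probability_setT_neq0 : [set: T] != set0.
Proof.
apply/eqP => T0; have := probability_setT P.
by rewrite T0 measure0 => /eqP; rewrite eq_sym onee_eq0.
Qed.

Lemma integral_cst_probability (r : \bar R) : \int[P]_x cst r x = r.
Proof. by rewrite integral_cst// [X in (_ * X)%E]probability_setT mule1. Qed.

Lemma ereal_inf_le_integral (f : T -> \bar R) :
  measurable_fun setT f -> (forall x, 0 <= f x) ->
  ereal_inf (range f) <= \int[P]_x f x.
Proof.
move=> mf f0; have inf0 : 0 <= ereal_inf (range f).
  by apply: le_ereal_inf_tmp => _ [x _ <-].
rewrite -[leLHS]integral_cst_probability.
by apply: ge0_le_integral => // x _; apply: ereal_inf_lbound; exists x.
Qed.

Lemma integral_EFinB_ge0 (B : R) (f : T -> \bar R) :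
  measurable_fun setT f -> (forall x, 0 <= f x) ->
  \int[P]_x (B%:E - f x) = B%:E - \int[P]_x f x.
Proof.
move=> mf f0.
have [If_fin|] := ltP (\int[P]_x f x) +oo.
  have If : P.-integrable setT f.
    by apply/integrableP; split=> //; under eq_integral do rewrite gee0_abs//.
  have IB := finite_measure_integrable_cst P B measurableT.
  rewrite -[LHS]/(\int[P]_x ((EFin \o cst B) \- f) x).
  by rewrite integralB// (integral_cst_probability B%:E).
rewrite leye_eq => /eqP If_oo; rewrite If_oo addeNy integralE.
set g := fun x => B%:E - f x.
have mg : measurable_fun setT g by apply: emeasurable_funB.
suff -> : \int[P]_x g^\- x = +oo by rewrite addeNy.
(* [f <= g^- + B^+], and [f] has infinite integral *)
have B0 : 0 <= (Num.max B 0%R)%:E by rewrite lee_fin le_max lexx orbT.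
have : +oo <= \int[P]_x g^\- x + (Num.max B 0%R)%:E.
  rewrite -If_oo -[X in _ + X](integral_cst_probability) -ge0_integralD//;
    last exact: measurable_funeneg.
  apply: ge0_le_integral => //.
  - by apply: emeasurable_funD => //; exact: measurable_funeneg.
  - move=> x _; rewrite funenegE /g; case: (f x) (f0 x) => [r r0|_|//]; last by [].
    rewrite -EFinB -EFinN -EFin_max -EFinD lee_fin.
    apply: (@le_trans _ _ (- (B - r) + B)%R); first by rewrite opprB subrK.
    by rewrite lerD// le_max lexx.
by case: (\int[P]_x g^\- x).
Qed.

End probability_integral.

Lemma EFinB_ereal_inf_le_sup {R : realType} {T : Type} (B : R) (f : T -> \bar R) :
  (B%:E - ereal_inf (range f) <= ereal_sup (range (fun x => B%:E - f x)))%E.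
Proof.
rewrite -leeBrDl// -ereal_supN; apply: ge_ereal_sup => _ [_ [x _ <-] <-].
by rewrite leeBrDl//; apply: ereal_sup_ubound; exists x.
Qed.

Lemma isometry_measurable {R : realType} {d : measure_display}
  {T : measurableType d} (dist : T -> T -> R) (phi : T -> T) :
  measurable = <<s [set A | dopen dist A] >> ->
  (forall x y, dist (phi x) (phi y) = dist x y) -> measurable_fun setT phi.
Proof.
move=> borel phi_iso; apply: (measurability _ borel).
move=> _ [A oA <-]; rewrite setTI borel; apply: sub_sigma_algebra.
move=> x /= Ax; have [e e0 He] := oA _ Ax.
by exists e => // z; rewrite -(phi_iso x z) => /He.
Qed.

Lemma ge0_integral_measure_preserving {R : realType} {d : measure_display}
  {T : measurableType d} (mu : measure T R) (phi : T -> T) (f : T -> \bar R) :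
  (forall A, measurable A -> mu (phi @^-1` A) = mu A) ->
  measurable_fun setT phi -> measurable_fun setT f -> (forall x, 0 <= f x)%E ->
  (\int[mu]_x f (phi x) = \int[mu]_x f x)%E.
Proof.
move=> mu_phi mphi mf f0.
rewrite -[LHS]/(\int[mu]_(x in phi @^-1` setT) (f \o phi) x)%E.
rewrite -ge0_integral_pushforward//; apply: eq_measure_integral => A mA _.
exact: mu_phi.
Qed.

Lemma compact_topological_group_invK (G : topologicalType)
  (mul : G -> G -> G) (inv : G -> G) (one : G) :
  compact_topological_group mul inv one -> involutive inv.
Proof.
move=> [mulA mul1 mulV _ _] a.
by rewrite -[RHS](mul1 a).1 -(mulV (inv a)).1 -mulA (mulV a).1 (mul1 _).2.
Qed.

Section equivariant_kernel.
Context {R : realType} {dX dY : measure_display}.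
Context {X : measurableType dX} {Y : measurableType dY} {G : Type}.
Context {inv : G -> G} {actX : G -> X -> X} {actY : G -> Y -> Y}.
Context {mX : probability X R} {mY : probability Y R} {F : X -> Y -> \bar R}.
Hypothesis invK : involutive inv.
Hypothesis actX_measurable : forall g, measurable_fun setT (actX g).
Hypothesis actY_measurable : forall g, measurable_fun setT (actY g).
Hypothesis actX_transitive : forall x x', exists g, actX g x = x'.
Hypothesis actY_transitive : forall y y', exists g, actY g y = y'.
Hypothesis mX_invariant : invariant_measure actX mX.
Hypothesis mY_invariant : invariant_measure actY mY.
Hypothesis F_measurable : measurable_fun setT (fun p : X * Y => F p.1 p.2).
Hypothesis F_ge0 : forall x y, (0 <= F x y)%E.
Hypothesis F_equivariant : forall g x y, F (actX g x) y = F x (actY (inv g) y).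
Local Open Scope ereal_scope.

Let F_ge0_pair (p : X * Y) : 0 <= F p.1 p.2. Proof. exact: F_ge0. Qed.

Let measurable_F x : measurable_fun setT (F x).
Proof. exact: measurableT_comp F_measurable (pair1_measurable x). Qed.

Let measurable_F' y : measurable_fun setT (F^~ y).
Proof. exact: measurableT_comp F_measurable (pair2_measurable y). Qed.

Lemma integralX_kernel_const y y' : \int[mX]_x F x y = \int[mX]_x F x y'.
Proof.
have [g <-] := actY_transitive y y'.
under [RHS]eq_integral => x _ do rewrite -[g in actY g](invK g) -F_equivariant.
symmetry; exact: (ge0_integral_measure_preserving _ _ (F^~ y) (mX_invariant (inv g))).
Qed.

Lemma integralY_kernel_const x x' : \int[mY]_y F x y = \int[mY]_y F x' y.
Proof.
have [g <-] := actX_transitive x x'.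
under [RHS]eq_integral => y _ do rewrite F_equivariant.
symmetry; exact: (ge0_integral_measure_preserving _ _ (F x) (mY_invariant (inv g))).
Qed.

Lemma integralX_integral_kernel (mu : probability Y R) y :
  \int[mX]_x \int[mu]_y' F x y' = \int[mX]_x F x y.
Proof.
rewrite (fubini_tonelli (fun p => F p.1 p.2) F_measurable F_ge0_pair) /=.
under eq_integral => y' _ do rewrite (integralX_kernel_const y' y).
exact: integral_cst_probability.
Qed.

Lemma integralX_integral_kernel_invariant (mu : probability Y R) x :
  \int[mX]_x' \int[mu]_y F x' y = \int[mY]_y F x y.
Proof.
have /set0P[y _] := probability_setT_neq0 mY.
rewrite (integralX_integral_kernel mu y) -(integralX_integral_kernel mY y).
under eq_integral => x' _ do rewrite (integralY_kernel_const x' x).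
exact: integral_cst_probability.
Qed.

(* the infimum over [X] of [x' |-> \int[mu] F x'] is at most its mean, which is
   the constant [x |-> \int[mY] F x] *)
Lemma EFinB_integral_invariant_le_sup (B : R) (mu : probability Y R) x :
  B%:E - \int[mY]_y F x y <= ereal_sup (range (fun x' => B%:E - \int[mu]_y F x' y)).
Proof.
rewrite -(integralX_integral_kernel_invariant mu x).
apply: le_trans (EFinB_ereal_inf_le_sup _ _); apply: leeB => //.
apply: ereal_inf_le_integral => [|x']; last exact: integral_ge0.
exact: measurable_fun_fubini_tonelli_F F_measurable F_ge0_pair.
Qed.

End equivariant_kernel.

Lemma potential_EFinB {R : realType} {dY : measure_display} {X : Type}
  {Y : measurableType dY} (K : X -> Y -> \bar R) (B : R) (mu : probability Y R) x :
  measurable_fun setT (K x) -> (forall y, K x y <= B%:E)%E ->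
  potential K mu x = (B%:E - \int[mu]_y (B%:E - K x y))%E.
Proof.
move=> mK KB; rewrite -integral_EFinB_ge0//; last first.
- by move=> y; rewrite sube_ge0 ?KB ?orbT.
- exact: emeasurable_funB.
apply: eq_integral => y _; have := KB y.
by case: (K x y) => [r||]//= _; rewrite -EFinD opprB addrC subrK.
Qed.

Theorem corollary4p8 (R : realType) (dX dY : measure_display)
  (X : measurableType dX) (Y : measurableType dY)
  (distX : X -> X -> R) (distY : Y -> Y -> R)
  (G : topologicalType) (mul : G -> G -> G) (inv : G -> G) (one : G)
  (actX : G -> X -> X) (actY : G -> Y -> Y)
  (mX : probability X R) (mY : probability Y R)
  (K : X -> Y -> \bar R) :
  compact_metric_borel distX ->
  compact_metric_borel distY ->
  compact_topological_group mul inv one ->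
  isometric_transitive_action mul one distX actX ->
  isometric_transitive_action mul one distY actY ->
  invariant_measure actX mX ->
  invariant_measure actY mY ->
  admissible_kernel distX inv actX actY mX K ->
  ereal_inf [set ereal_sup (range (potential K mu)) | mu in [set: probability Y R]]
  = ereal_sup (range (potential K mY)).
Proof.
move=> [_ _ borelX] [_ _ borelY] /compact_topological_group_invK invK
  [_ _ _ isoX transX] [_ _ _ isoY transY] mX_inv mY_inv [mK [B _ KB] _ _ K_equiv].
have mactX g := isometry_measurable _ _ borelX (isoX g).
have mactY g := isometry_measurable _ _ borelY (isoY g).
have mKx x : measurable_fun setT (K x) := measurableT_comp mK (pair1_measurable x).
have UE mu x := potential_EFinB K B mu x (mKx x) (KB x).
pose F x y : \bar R := (B%:E - K x y)%E.
have F_ge0 x y : (0 <= F x y)%E by rewrite sube_ge0 ?KB ?orbT.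
have mF : measurable_fun setT (fun p : X * Y => F p.1 p.2) by exact: emeasurable_funB.
have F_equiv g x y : F (actX g x) y = F x (actY (inv g) y) by rewrite /F K_equiv.
have /set0P[x0 _] := probability_setT_neq0 mX.
have UmY_cst : potential K mY = cst (B%:E - \int[mY]_y F x0 y)%E.
  apply/funext => x; rewrite UE.
  by rewrite (integralY_kernel_const mactY transX mY_inv mF F_ge0 F_equiv x x0).
have sup_UmY : ereal_sup (range (potential K mY)) = (B%:E - \int[mY]_y F x0 y)%E.
  rewrite UmY_cst; exact/ereal_sup_cst/(probability_setT_neq0 mX).
apply/eqP; rewrite eq_le; apply/andP; split.
  by apply: ereal_inf_lbound; exists mY.
rewrite sup_UmY.
apply: le_ereal_inf_tmp => _ [mu _ <-].
have -> : potential K mu = fun x => (B%:E - \int[mu]_y F x y)%E.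
  by apply/funext => x; exact: UE.
exact: (EFinB_integral_invariant_le_sup invK mactX mactY transX transY mX_inv mY_inv
  mF F_ge0 F_equiv).
Qed.
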